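(* Let $\mathsf{K}$ be a variety, $\mathbf{B}\in\mathsf{K}$, and $\mathbf{A}\leq\mathbf{B}$ full in $\mathsf{K}$. If $\phi$ is a congruence of $\mathbf{A}$ and there exists a congruence $\theta$ of $\mathbf{B}$ with $\theta\neq\mathrm{id}_B$ and $\theta{\upharpoonright}_A\subseteq\phi$, then $\phi=\mathrm{Cg}^{\mathbf{B}}(\phi){\upharpoonright}_A$.
   Context: $\mathrm{Cg}^{\mathbf{B}}(X)$ is the least congruence of $\mathbf{B}$ containing $X\subseteq B\times B$; $\theta{\upharpoonright}_A=\theta\cap(A\times A)$. $\mathbf{A}\leq\mathbf{B}$ is full in $\mathsf{K}$ if it is proper, almost total ($B=\mathrm{Sg}^{\mathbf{B}}(A\cup\{b\})$ for some $b\in B$), and every congruence $\theta\neq\mathrm{id}_B$ of $\mathbf{B}$ relates each $b\in B$ to some $a\in A$. *)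

From mathcomp Require Import all_boot.
Set Implicit Arguments. Unset Strict Implicit. Unset Printing Implicit Defensive.

Record signature := Signature { sym : Type; arity : sym -> nat }.

Record algebra (S : signature) := Algebra {
  carrier :> Type;
  op : forall f : sym S, ('I_(arity f) -> carrier) -> carrier }.

Section UA.
Variable S : signature.

Inductive term : Type :=
| Var : nat -> term
| App : forall f : sym S, ('I_(arity f) -> term) -> term.

Fixpoint eval (B : algebra S) (v : nat -> B) (t : term) : B :=
  match t with
  | Var n => v n
  | App f ts => @op S B f (fun i => eval v (ts i))
  end.

Definition identity := (term * term)%type.

Definition satisfies (B : algebra S) (e : identity) : Prop :=
  forall v : nat -> B, eval v e.1 = eval v e.2.

Definition is_variety (K : algebra S -> Prop) : Prop :=
  exists E : identity -> Prop,
    forall B : algebra S, K B <-> (forall e, E e -> satisfies B e).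

Variable B : algebra S.

Definition subuniverse (A : B -> Prop) : Prop :=
  forall f (xs : 'I_(arity f) -> B), (forall i, A (xs i)) -> A (@op S B f xs).

Definition subalgebra (A : B -> Prop) : Prop :=
  subuniverse A /\ exists a, A a.

Definition Sg (X : B -> Prop) (x : B) : Prop :=
  forall U, subuniverse U -> (forall y, X y -> U y) -> U x.

Definition congruence (theta : B -> B -> Prop) : Prop :=
  (forall x, theta x x) /\
  (forall x y, theta x y -> theta y x) /\
  (forall x y z, theta x y -> theta y z -> theta x z) /\
  (forall f (xs ys : 'I_(arity f) -> B),
      (forall i, theta (xs i) (ys i)) -> theta (@op S B f xs) (@op S B f ys)).

(* Congruence of the subalgebra with universe A, as a relation on A x A. *)
Definition congruence_on (A : B -> Prop) (phi : B -> B -> Prop) : Prop :=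
  (forall x y, phi x y -> A x /\ A y) /\
  (forall x, A x -> phi x x) /\
  (forall x y, phi x y -> phi y x) /\
  (forall x y z, phi x y -> phi y z -> phi x z) /\
  (forall f (xs ys : 'I_(arity f) -> B),
      (forall i, phi (xs i) (ys i)) -> phi (@op S B f xs) (@op S B f ys)).

Definition Cg (X : B -> B -> Prop) (x y : B) : Prop :=
  forall theta, congruence theta -> (forall a b, X a b -> theta a b) -> theta x y.

Definition restr (theta : B -> B -> Prop) (A : B -> Prop) (x y : B) : Prop :=
  theta x y /\ A x /\ A y.

Definition is_id (theta : B -> B -> Prop) : Prop :=
  forall x y, theta x y <-> x = y.

Definition rel_eq (r s : B -> B -> Prop) : Prop := forall x y, r x y <-> s x y.

Definition rel_sub (r s : B -> B -> Prop) : Prop := forall x y, r x y -> s x y.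

End UA.

(* A <= B is full in K (with B in K): proper, almost total, and every
   nontrivial congruence of B relates each element of B to an element of A. *)
Definition full (S : signature) (K : algebra S -> Prop) (B : algebra S)
    (A : B -> Prop) : Prop :=
  K B /\ subalgebra A /\
  (exists b : B, ~ A b) /\
  (exists b : B, forall x, Sg (fun y => A y \/ y = b) x) /\
  (forall theta, congruence theta -> ~ is_id theta ->
     forall b : B, exists a, A a /\ theta b a).

(* If every element of B is theta-related to an element of A and theta only
   identifies elements of A that phi already identifies, then the relation
   theta ; phi ; theta is a congruence of B that contains phi and restricts to
   phi on A.  Hence Cg^B(phi) restricted to A is squeezed between phi and phi. *)

From mathcomp Require Import all_boot.
From Stdlib Require Import IndefiniteDescription.

Set Implicit Arguments. Unset Strict Implicit. Unset Printing Implicit Defensive.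

Definition rel_comp (T : Type) (r s : T -> T -> Prop) (x z : T) : Prop :=
  exists y, r x y /\ s y z.

Section CongruenceGeneration.
Variables (S : signature) (B : algebra S).

Lemma Cg_sub (X : B -> B -> Prop) : rel_sub X (Cg X).
Proof. by move=> x y Xxy theta _; apply. Qed.

Lemma Cg_min (X rho : B -> B -> Prop) :
  congruence rho -> rel_sub X rho -> rel_sub (Cg X) rho.
Proof. by move=> rho_cong Xrho x y Cgxy; apply: Cgxy. Qed.

End CongruenceGeneration.

Section ThetaConjugate.
Variables (S : signature) (B : algebra S) (A : B -> Prop).
Variables theta phi : B -> B -> Prop.
Hypothesis theta_cong : congruence theta.
Hypothesis phi_cong : congruence_on A phi.
Hypothesis theta_restr_sub : rel_sub (restr theta A) phi.
Hypothesis theta_onto : forall b : B, exists a, A a /\ theta b a.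

Definition conj_rel : B -> B -> Prop := rel_comp theta (rel_comp phi theta).

Lemma conj_rel_sub : rel_sub phi conj_rel.
Proof.
case: theta_cong => thR _ x y phixy.
by exists x; split=> //; exists y.
Qed.

Lemma conj_rel_restr : rel_sub (restr conj_rel A) phi.
Proof.
case: phi_cong => phiA [_ [_ [phiT _]]].
move=> x y [[a [xa [a' [aa' a'y]]]] [Ax Ay]].
have [Aa Aa'] := phiA _ _ aa'.
apply: (phiT _ a); first by apply: theta_restr_sub.
by apply: (phiT _ a') => //; apply: theta_restr_sub.
Qed.

Lemma conj_rel_op f (xs ys : 'I_(arity f) -> B) :
  (forall i, conj_rel (xs i) (ys i)) -> conj_rel (op xs) (op ys).
Proof.
case: theta_cong => _ [_ [_ thC]]; case: phi_cong => _ [_ [_ [_ phiC]]].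
move=> /functional_choice [a xs_a].
have /functional_choice [a' a_a'] : forall i, rel_comp phi theta (a i) (ys i).
  by move=> i; case: (xs_a i).
exists (op a); split; first by apply: thC => i; case: (xs_a i).
exists (op a'); split; first by apply: phiC => i; case: (a_a' i).
by apply: thC => i; case: (a_a' i).
Qed.

Lemma conj_rel_congruence : congruence conj_rel.
Proof.
case: theta_cong => _ [thS [thT _]]; case: phi_cong => phiA [phiR [phiS [phiT _]]].
split; [|split; [|split]].
- move=> x; have [a [Aa xa]] := theta_onto x.
  by exists a; split=> //; exists a; split; [exact: phiR | exact: thS].
- move=> x y [a [xa [a' [aa' a'y]]]].
  by exists a'; split; [exact: thS | exists a; split; [exact: phiS | exact: thS]].
- move=> x y z [a [xa [a' [aa' a'y]]]] [c [yc [c' [cc' c'z]]]].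
  have a'c : phi a' c.
    apply: theta_restr_sub; split; first exact: (thT _ y).
    by split; [case: (phiA _ _ aa') | case: (phiA _ _ cc')].
  by exists a; split=> //; exists c'; split=> //; apply: phiT aa' (phiT _ _ _ a'c cc').
- exact: conj_rel_op.
Qed.

Lemma Cg_restr_eq : rel_eq phi (restr (Cg phi) A).
Proof.
case: phi_cong => phiA _ x y; split.
  by move=> phixy; split; [exact: Cg_sub | exact: phiA].
move=> [Cgxy Axy]; apply: conj_rel_restr; split=> //.
exact: Cg_min conj_rel_congruence conj_rel_sub _ _ Cgxy.
Qed.

End ThetaConjugate.

Theorem mainTheorem14 (S : signature) (K : algebra S -> Prop)
    (B : algebra S) (A : B -> Prop) (phi : B -> B -> Prop) :
  is_variety K -> K B -> full K A ->
  congruence_on A phi ->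
  (exists theta, congruence theta /\ ~ is_id theta /\ rel_sub (restr theta A) phi) ->
  rel_eq phi (restr (Cg phi) A).
Proof.
move=> _ _ [_ [_ [_ [_ full_rep]]]] phi_cong [theta [theta_cong [theta_nontriv theta_sub]]].
exact: Cg_restr_eq theta_cong phi_cong theta_sub (full_rep theta theta_cong theta_nontriv).
Qed.
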